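(* Let $(V,E)$ be a finite graph with $E\neq\emptyset$ and let $p\in(0,1)$. Let $(\eta_t,\sigma_t)_{t\ge0}$ be a continuous-time Markov jump process on $\{0,1\}^E\times\{-1,1\}^V$ with the following rates: (i) if $\eta'=\eta$ and there is $x\in V$ with $\sigma'=\sigma^x$ and $\eta(e)=0$ for all $e\in E_x$, the rate from $(\eta,\sigma)$ to $(\eta',\sigma')$ is $1$; (ii) if $\sigma'=\sigma$ and there is $e\in E$ with $\eta'=\eta^e$, the rate is $p\mathbf 1_{\eta(e)=0}\delta_\sigma(e)+(1-p)\mathbf 1_{\eta(e)=1}$; (iii) all other off-diagonal rates are $0$. Then $(\eta_t,\sigma_t)_{t\ge0}$ is reversible with respect to $IP$, but neither of its marginal processes $(\eta_t)_{t\ge0}$ and $(\sigma_t)_{t\ge0}$ is a Markov jump process.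
   Context: Edge configurations $\eta\in\{0,1\}^E$, spin configurations $\sigma\in\{-1,1\}^V$. For $e=\langle x,y\rangle$, $\delta_\sigma(e)=\mathbf 1_{\sigma(x)=\sigma(y)}$. $IP(\eta,\sigma)=\frac1Z\prod_{e\in E}\big(p\mathbf 1_{\eta(e)=1}\delta_\sigma(e)+(1-p)\mathbf 1_{\eta(e)=0}\big)$ with $Z$ the normalizing constant. $E_x$ is the set of edges with endvertex $x$; $\sigma^x$ is $\sigma$ with the spin at $x$ flipped; $\eta^e$ is $\eta$ with the value at edge $e$ changed. Reversibility with respect to $IP$ means $IP(a)q(a,b)=IP(b)q(b,a)$ for all states $a,b$, $q$ being the rates. A marginal process (e.g. $(\sigma_t)$) is said to be a Markov jump process if it is a time-homogeneous Markov process for every initial distribution, with transition rates not depending on the initial distribution (lumpability). *)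

From HB Require Import structures.
From mathcomp Require Import all_boot all_order all_algebra.
From mathcomp Require Import all_classical all_reals all_analysis.
Set Implicit Arguments. Unset Strict Implicit. Unset Printing Implicit Defensive.
Import Order.TTheory GRing.Theory Num.Theory numFieldNormedType.Exports.
Local Open Scope ring_scope.

Section CTMC.
Variables (R : realType) (S : finType).

Definition generator (q : S -> S -> R) (a b : S) : R :=
  if a == b then - \sum_(c | c != a) q a c else q a b.

Fixpoint kpow (Q : S -> S -> R) (k : nat) (a b : S) : R :=
  match k with
  | 0%N => (a == b)%:R
  | k'.+1 => \sum_(c : S) kpow Q k' a c * Q c b
  end.

Definition trans (Q : S -> S -> R) (t : R) (a b : S) : R :=
  limn (series (fun k : nat => t ^+ k / (k`!)%:R * kpow Q k a b)).

Fixpoint propag (T : eqType) (Q : S -> S -> R) (f : S -> T)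
    (mu : S -> R) (dys : seq (R * T)) : S -> R :=
  match dys with
  | [::] => mu
  | (d, y) :: r =>
      propag Q f (fun b => (f b == y)%:R * \sum_(a : S) mu a * trans Q d a b) r
  end.

(* P_mu( f(X_{t_1}) = y_1, ..., f(X_{t_n}) = y_n ) where X is the chain with
   generator Q and initial law mu, t_i = d_1 + ... + d_i, dys = [(d_i, y_i)] *)
Definition fdd (T : eqType) (Q : S -> S -> R) (f : S -> T)
    (mu : S -> R) (dys : seq (R * T)) : R :=
  \sum_(b : S) propag Q f mu dys b.

Definition is_distr (mu : S -> R) : Prop :=
  (forall a, 0 <= mu a) /\ \sum_(a : S) mu a = 1.

Definition reversible (pi : S -> R) (q : S -> S -> R) : Prop :=
  forall a b, pi a * q a b = pi b * q b a.
End CTMC.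

(* The marginal f(X) of the chain with generator Q is a Markov jump process:
   there are rates r on T (not depending on the initial law) such that for every
   initial law mu of X, all finite-dimensional distributions of f(X) agree with
   those of the Markov jump process with rates r started from f_* mu. *)
Definition marginal_is_markov_jump (R : realType) (S T : finType)
    (Q : S -> S -> R) (f : S -> T) : Prop :=
  exists r : T -> T -> R,
    (forall y y', y != y' -> 0 <= r y y') /\
    forall mu : S -> R, is_distr mu ->
    forall dys : seq (R * T), all (fun dy => 0 <= dy.1) dys ->
      fdd Q f mu dys =
      fdd (generator r) id (fun y => \sum_(a | f a == y) mu a) dys.

Section Model.
Variables (R : realType) (V : finType) (G : rel V) (p : R).

Definition is_edge (e : {set V}) : bool :=
  [exists x, exists y, G x y && (e == [set x; y])].
Definition edge := {e : {set V} | is_edge e}.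

(* edge configurations eta : E -> {0,1} (true = 1),
   spin configurations sigma : V -> {-1,1} (true = +1) *)
Definition state := ({ffun edge -> bool} * {ffun V -> bool})%type.

Definition delta (sigma : {ffun V -> bool}) (e : edge) : bool :=
  [forall x in val e, forall y in val e, sigma x == sigma y].

Definition flipV (sigma : {ffun V -> bool}) (x : V) : {ffun V -> bool} :=
  [ffun z => if z == x then ~~ sigma z else sigma z].
Definition flipE (eta : {ffun edge -> bool}) (e : edge) : {ffun edge -> bool} :=
  [ffun g => if g == e then ~~ eta g else eta g].

Definition weight (s : state) : R :=
  \prod_(e : edge) (if s.1 e then p * (delta s.2 e)%:R else 1 - p).
Definition IP (s : state) : R := weight s / \sum_(s' : state) weight s'.

Definition rates (s s' : state) : R :=
  let: (eta, sigma) := s in let: (eta', sigma') := s' in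
  if s == s' then 0
  else if (eta' == eta) &&
          [exists x, (sigma' == flipV sigma x) &&
                     [forall e : edge, (x \in val e) ==> ~~ eta e]]
  then 1
  else if (sigma' == sigma) && [exists e, eta' == flipE eta e] then
    \sum_(e | eta' == flipE eta e)
      (p * (~~ eta e)%:R * (delta sigma e)%:R + (1 - p) * (eta e)%:R)
  else 0.
End Model.

(* Detailed balance is checked move by move: a spin flip at x is possible, in
   both directions, exactly when every edge at x is closed, and then it leaves
   the weight unchanged; flipping the edge e multiplies the weight by the ratio
   of the two edge rates.
   If a marginal f(X) were Markov with rates independent of the initial law,
   then two states a, a' with f a = f a' would give f(X_t) the same law.  From
   the exponential series of the generator, P_a(f(X_t) = y) = t * sum_(f b = y)
   q(a, b) + O(t^2) for y <> f a, so the two laws differ for small t as soon as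
   these sums differ.  Opening an edge e from eta = 0 has rate p * delta_sigma(e),
   which depends on sigma; flipping the spin at an endpoint of e has rate 1 or 0
   according to whether e is closed, which depends on eta. *)

From HB Require Import structures.
From mathcomp Require Import all_boot all_order all_algebra.
From mathcomp Require Import all_classical all_reals all_analysis.
From mathcomp Require Import ring lra.
Import Order.TTheory GRing.Theory Num.Theory numFieldNormedType.Exports.
Local Open Scope ring_scope.
Set Implicit Arguments. Unset Strict Implicit. Unset Printing Implicit Defensive.

Lemma sumr_dirac (R : pzSemiRingType) (S : finType) (c : S) (X : S -> R) :
  \sum_a (a == c)%:R * X a = X c.
Proof. by under eq_bigr do rewrite mulr_natl mulrb; rewrite -big_mkcond big_pred1_eq. Qed.

Lemma sumr_dirac_cond (R : pzSemiRingType) (S : finType) (P : pred S) (c : S) :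
  \sum_(a | P a) (a == c)%:R = (P c)%:R :> R.
Proof.
rewrite big_mkcond -(sumr_dirac c (fun a => (P a)%:R)).
by apply: eq_bigr => a _; case: (P a); rewrite ?mulr1 ?mulr0.
Qed.

Lemma sum_fst_eq (R : pzSemiRingType) (A B : finType) (y : A) (g : A * B -> R) :
  \sum_(b : A * B) (b.1 == y)%:R * g b = \sum_z g (y, z).
Proof.
have -> : \sum_(b : A * B) (b.1 == y)%:R * g b = \sum_a \sum_z (a == y)%:R * g (a, z).
  by rewrite pair_bigA; apply: eq_bigr => -[].
under eq_bigr do rewrite -mulr_sumr.
exact: (sumr_dirac y (fun a => \sum_z g (a, z))).
Qed.

Lemma sum_snd_eq (R : pzSemiRingType) (A B : finType) (z : B) (g : A * B -> R) :
  \sum_(b : A * B) (b.2 == z)%:R * g b = \sum_y g (y, z).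
Proof.
have -> : \sum_(b : A * B) (b.2 == z)%:R * g b = \sum_y \sum_w (w == z)%:R * g (y, w).
  by rewrite pair_bigA; apply: eq_bigr => -[].
by apply: eq_bigr => y _; rewrite (sumr_dirac z (fun w => g (y, w))).
Qed.

Section TransitionExpansion.
Variables (R : realType) (S : finType) (Q : S -> S -> R).
Local Open Scope classical_set_scope.

Definition rate_bound : R := 1 + \sum_c \sum_d `|Q c d|.

Lemma rate_bound_gt0 : 0 < rate_bound.
Proof. by rewrite ltr_pwDl // sumr_ge0 // => c _; rewrite sumr_ge0. Qed.

Lemma kpow1 a b : kpow Q 1 a b = Q a b.
Proof.
rewrite /= -[RHS](sumr_dirac a (Q ^~ b)).
by apply: eq_bigr => c _; rewrite eq_sym.
Qed.

Lemma norm_kpow_le k a b : `|kpow Q k a b| <= rate_bound ^+ k.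
Proof.
elim: k b => [|k IHk] b /=; first by case: (a == b); rewrite ?normr1 ?normr0.
have col_le : \sum_c `|Q c b| <= rate_bound.
  rewrite /rate_bound ler_wpDl // ler_sum // => c _.
  by rewrite (bigD1 b) //= lerDl sumr_ge0.
apply: le_trans (ler_norm_sum _ _ _) _.
rewrite exprSr; apply: le_trans (_ : \sum_c rate_bound ^+ k * `|Q c b| <= _).
  by apply: ler_sum => c _; rewrite normrM ler_wpM2r.
by rewrite -mulr_sumr ler_wpM2l // exprn_ge0 // ltW // rate_bound_gt0.
Qed.

Definition exp_term (t : R) a b k := t ^+ k / k`!%:R * kpow Q k a b.

Lemma norm_exp_term_le t a b k : 0 <= t ->
  `|exp_term t a b k| <= (t * rate_bound) ^+ k.
Proof.
move=> t_ge0; rewrite /exp_term normrM exprMn ler_pM ?norm_kpow_le //.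
have fact_ge1 : 1 <= k`!%:R :> R by rewrite ler1n fact_gt0.
rewrite ger0_norm ?divr_ge0 ?exprn_ge0 // ler_pdivrMr ?(lt_le_trans ltr01) //.
by rewrite ler_peMr // exprn_ge0.
Qed.

Lemma is_cvg_exp_series t a b : 0 <= t -> t * rate_bound < 1 ->
  cvgn (series (exp_term t a b)).
Proof.
move=> t_ge0 tK_lt1; apply: normed_cvg.
have tK_ge0 : 0 <= t * rate_bound by rewrite mulr_ge0 // ltW // rate_bound_gt0.
apply: (@series_le_cvg _ _ (geometric 1 (t * rate_bound))) => [n|n|n|].
- exact: normr_ge0.
- exact: geometric_ge0.
- by rewrite /geometric /= mul1r norm_exp_term_le.
- by apply: is_cvg_geometric_series; rewrite ger0_norm.
Qed.

Lemma trans_first_order t a b : 0 < t -> t * rate_bound <= 2^-1 ->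
  `|trans Q t a b - (a == b)%:R - t * Q a b| <= 2 * (t * rate_bound) ^+ 2.
Proof.
set x := t * rate_bound => t_gt0 x_le.
have x_gt0 : 0 < x by rewrite mulr_gt0 // rate_bound_gt0.
have exp_cvg : series (exp_term t a b) @ \oo --> trans Q t a b.
  by apply: is_cvg_exp_series; [exact: ltW | rewrite -/x; lra].
have tail_le n : `|series (exp_term t a b) n.+2 - (a == b)%:R - t * Q a b|
    <= 2 * x ^+ 2.
  have -> : series (exp_term t a b) n.+2 - (a == b)%:R - t * Q a b =
      \sum_(k < n) exp_term t a b k.+2.
    rewrite /series /= !big_nat_recl // big_mkord /exp_term kpow1 /=.
    rewrite expr0 expr1 !divr1 mul1r; ring.
  apply: le_trans (ler_norm_sum _ _ _) _.
  apply: le_trans (_ : series (geometric (x ^+ 2) x) n <= _).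
    rewrite /series /= big_mkord ler_sum // => k _.
    by rewrite /geometric /= -exprD addnC addn2 norm_exp_term_le // ltW.
  have x2_ge0 : 0 <= x ^+ 2 by rewrite exprn_ge0 // ltW.
  apply: le_trans (geometric_le_lim n x2_ge0 x_gt0 _) _.
    by rewrite ger0_norm; lra.
  rewrite ler_pdivrMr; last lra.
  nra.
apply: cvgr_to_le (cvg_norm (cvgB (cvgB exp_cvg (cvg_cst _)) (cvg_cst _))) _.
near=> n; have -> : n = n.-2.+2 by near: n; exists 2%N => // [[|[|n]]].
exact: tail_le.
Unshelve. all: by end_near.
Qed.

End TransitionExpansion.

Section FirstOrderGap.
Variables (R : realType) (S : finType) (Q : S -> S -> R) (F : pred S) (a a' : S).
Hypotheses (Fa : ~~ F a) (Fa' : ~~ F a').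
Local Open Scope classical_set_scope.

Let rate_gap := \sum_b (F b)%:R * (Q a b - Q a' b).

Lemma trans_gap_first_order t : 0 < t -> t * rate_bound Q <= 2^-1 ->
  `|\sum_b (F b)%:R * (trans Q t a b - trans Q t a' b) - t * rate_gap|
    <= t ^+ 2 * (4 * #|S|%:R * rate_bound Q ^+ 2).
Proof.
move=> t_gt0 tK_le; rewrite /rate_gap mulr_sumr -sumrB.
apply: le_trans (ler_norm_sum _ _ _) _.
have -> : t ^+ 2 * (4 * #|S|%:R * rate_bound Q ^+ 2)
    = \sum_(b : S) 4 * (t * rate_bound Q) ^+ 2.
  by rewrite sumr_const -mulr_natr exprMn; ring.
apply: ler_sum => b _.
have F_dirac c : ~~ F c -> (F b)%:R * (c == b)%:R = 0 :> R.
  by move=> Fc; case: eqP => [<-|_]; rewrite ?(negbTE Fc) ?mul0r ?mulr0.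
have -> : (F b)%:R * (trans Q t a b - trans Q t a' b)
      - t * ((F b)%:R * (Q a b - Q a' b))
    = (F b)%:R * ((trans Q t a b - (a == b)%:R - t * Q a b)
                  - (trans Q t a' b - (a' == b)%:R - t * Q a' b)).
  by rewrite !mulrBr (F_dirac a Fa) (F_dirac a' Fa'); ring.
rewrite normrM -[X in _ <= X]mul1r ler_pM ?normr_ge0 //.
  by case: (F b); rewrite ?normr1 ?normr0.
apply: le_trans (ler_normB _ _) _.
have := trans_first_order a b t_gt0 tK_le.
have := trans_first_order a' b t_gt0 tK_le.
lra.
Qed.

Lemma trans_separates : rate_gap != 0 ->
  exists2 t, 0 < t & \sum_b (F b)%:R * trans Q t a b != \sum_b (F b)%:R * trans Q t a' b.
Proof.
move=> gap_neq0; set K := rate_bound Q; set c := 4 * #|S|%:R * K ^+ 2.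
have K_gt0 : 0 < K := rate_bound_gt0 Q.
have c_gt0 : 0 < c.
  by rewrite !mulr_gt0 ?exprn_gt0 // ltr0n; apply/card_gt0P; exists a.
have gap_gt0 : 0 < `|rate_gap| by rewrite normr_gt0.
have : \forall t \near 0^'+, [/\ 0 < t, t * K <= 2^-1 & t * c < `|rate_gap|].
  near=> t; split.
  - by near: t; exact: nbhs_right_gt.
  - by rewrite -ler_pdivlMr //; near: t; apply: nbhs_right_le; rewrite divr_gt0.
  - by rewrite -ltr_pdivlMr //; near: t; apply: nbhs_right_lt; rewrite divr_gt0.
case/filter_ex => t [t_gt0 tK_le tc_lt]; exists t => //.
rewrite -subr_eq0 -sumrB; apply/eqP => eq0.
have := trans_gap_first_order t_gt0 tK_le.
under eq_bigr do rewrite mulrBr.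
rewrite eq0 sub0r normrN normrM (gtr0_norm t_gt0) expr2 -mulrA -/K -/c.
by rewrite ler_pM2l //; lra.
Unshelve. all: by end_near.
Qed.

End FirstOrderGap.

Lemma fdd_dirac1 (R : realType) (S T : finType) (Q : S -> S -> R) (f : S -> T)
    (c : S) (t : R) (y : T) :
  fdd Q f (fun a => (a == c)%:R) [:: (t, y)] = \sum_b (f b == y)%:R * trans Q t c b.
Proof. by apply: eq_bigr => b _; congr (_ * _); apply: sumr_dirac. Qed.

Lemma generator_offdiag (R : realType) (S : finType) (q : S -> S -> R) a b :
  a != b -> generator q a b = q a b.
Proof. by rewrite /generator => /negbTE ->. Qed.

Lemma marginal_not_markov_jump (R : realType) (S T : finType) (q : S -> S -> R)
    (f : S -> T) a a' y :
  f a = f a' -> f a != y -> \sum_b (f b == y)%:R * (q a b - q a' b) != 0 ->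
  ~ marginal_is_markov_jump (generator q) f.
Proof.
move=> faa' fay gap_neq0 [r [_ markov]].
have fa'y : f a' != y by rewrite -faa'.
have gap_eq : \sum_b (f b == y)%:R * (generator q a b - generator q a' b)
    = \sum_b (f b == y)%:R * (q a b - q a' b).
  apply: eq_bigr => b _; case fby: (f b == y); last by rewrite !mul0r.
  have neq_b c : f c != y -> c != b by apply: contraNneq => ->; rewrite fby.
  by rewrite !generator_offdiag ?neq_b.
rewrite -gap_eq in gap_neq0.
have [t t_gt0] := @trans_separates _ _ _ (fun b => f b == y) _ _ fay fa'y gap_neq0.
apply/negP; rewrite negbK -!fdd_dirac1.
have dirac_distr c : is_distr (fun a => (a == c)%:R : R).
  by split=> [a''|]; [exact: ler0n | rewrite (@sumr_dirac_cond R _ predT)].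
have t_ge0 : all (fun dy => 0 <= dy.1) [:: (t, y)] by rewrite /= ltW.
rewrite !markov //; apply/eqP; congr fdd; apply: funext => z.
by rewrite !sumr_dirac_cond faa'.
Qed.

Lemma flipVK (T : finType) (s : {ffun T -> bool}) x : flipV (flipV s x) x = s.
Proof. by apply/ffunP => z; rewrite !ffunE; case: eqP => // ->; rewrite negbK. Qed.

Lemma flipV_neq (T : finType) (s : {ffun T -> bool}) x : flipV s x != s.
Proof. by apply/eqP => /ffunP /(_ x); rewrite ffunE eqxx; case: (s x). Qed.

Lemma flipV_inj (T : finType) (s : {ffun T -> bool}) : injective (flipV s).
Proof.
move=> x y /ffunP /(_ x); rewrite !ffunE eqxx.
by case: eqP => // _; case: (s x).
Qed.

Lemma flipEK (V : finType) (G : rel V) (eta : {ffun edge G -> bool}) e :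
  flipE (flipE eta e) e = eta.
Proof. exact: flipVK. Qed.

Lemma flipE_flipV (V : finType) (G : rel V) (eta : {ffun edge G -> bool}) e :
  flipE eta e = flipV eta e.
Proof. by []. Qed.

Section Model.
Variables (R : realType) (V : finType) (G : rel V) (p : R).
Implicit Types (eta : {ffun edge G -> bool}) (s : {ffun V -> bool}) (e : edge G).

Definition closed_at eta (x : V) := [forall e : edge G, (x \in val e) ==> ~~ eta e].

Definition edge_rate eta s e :=
  p * (~~ eta e)%:R * (delta s e)%:R + (1 - p) * (eta e)%:R.

Lemma rates_flipV eta s eta' x :
  rates p (eta, s) (eta', flipV s x) = (eta' == eta)%:R * (closed_at eta x)%:R.
Proof.
rewrite /rates xpair_eqE [s == _]eq_sym (negbTE (flipV_neq s x)) andbF.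
have -> : [exists z, (flipV s x == flipV s z) && closed_at eta z] = closed_at eta x.
  apply/existsP/idP => [[z /andP [/eqP/flipV_inj -> //]]|]; by exists x; rewrite eqxx.
by case: (eta' == eta); case: (closed_at eta x); rewrite ?mulr1 ?mulr0 ?mul0r.
Qed.

Lemma rates_flipE eta s s' e :
  rates p (eta, s) (flipE eta e, s') = (s' == s)%:R * edge_rate eta s e.
Proof.
rewrite /rates xpair_eqE eq_sym flipE_flipV (negbTE (flipV_neq eta e)) /=.
case: (s' == s); last by rewrite mul0r.
have -> : [exists g, flipV eta e == flipE eta g] by apply/existsP; exists e.
rewrite mul1r (big_pred1 e) // => g.
by rewrite flipE_flipV eq_sym (inj_eq (@flipV_inj _ _)).
Qed.

Lemma rates_eq0 eta s eta' s' :
  (forall x, (eta', s') <> (eta, flipV s x)) ->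
  (forall e, (eta', s') <> (flipE eta e, s)) ->
  rates p (eta, s) (eta', s') = 0.
Proof.
move=> not_spin not_edge; rewrite /rates; case: eqP => // _.
case: ifP => [/andP [/eqP eta_eq /existsP [x /andP [/eqP s_eq _]]]|_].
  by case: (not_spin x); rewrite eta_eq s_eq.
case: ifP => // /andP [/eqP s_eq /existsP [e /eqP eta_eq]].
by case: (not_edge e); rewrite eta_eq s_eq.
Qed.

Lemma delta_flipV s x e : x \notin val e -> delta (flipV s x) e = delta s e.
Proof.
move=> x_notin_e; apply: eq_forallb_in => u u_e; apply: eq_forallb_in => v v_e.
have neq_x w : w \in val e -> (w == x) = false.
  by move=> w_e; apply: contraNF x_notin_e => /eqP <-.
by rewrite !ffunE (neq_x u u_e) (neq_x v v_e).
Qed.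

Lemma weight_flipV eta s x :
  closed_at eta x -> weight p (eta, flipV s x) = weight p (eta, s).
Proof.
move=> /forallP closed_x; apply: eq_bigr => e _ /=; case: ifP => // eta_e.
have x_notin_e : x \notin val e by have := closed_x e; rewrite eta_e implybF.
by rewrite delta_flipV.
Qed.

Lemma weight_flipE eta s e :
  weight p (eta, s) * edge_rate eta s e
  = weight p (flipE eta e, s) * edge_rate (flipE eta e) s e.
Proof.
rewrite /weight /= (bigD1 e) //= [in RHS](bigD1 e) //= /edge_rate !ffunE eqxx.
under [in RHS]eq_bigr => g g_neq_e do rewrite ffunE (negbTE g_neq_e).
by case: (eta e) => /=; ring.
Qed.

Lemma weight_reversible (a b : state G) :
  weight p a * rates p a b = weight p b * rates p b a.
Proof.
case: a b => eta s [eta' s'].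
have [[x [-> ->]]|not_spin] := pselect (exists x, (eta', s') = (eta, flipV s x)).
  have rates_back := rates_flipV eta (flipV s x) eta x; rewrite flipVK in rates_back.
  rewrite rates_flipV rates_back.
  case: (boolP (closed_at eta x)) => [/weight_flipV -> //|_].
  by rewrite /= mulr0n !mulr0.
have [[e [-> ->]]|not_edge] := pselect (exists e, (eta', s') = (flipE eta e, s)).
  have rates_back := rates_flipE (flipE eta e) s s e; rewrite flipEK in rates_back.
  by rewrite rates_flipE rates_back eqxx !mul1r weight_flipE.
have spin_to x : (eta', s') <> (eta, flipV s x) by move=> eq; apply: not_spin; exists x.
have edge_to e : (eta', s') <> (flipE eta e, s) by move=> eq; apply: not_edge; exists e.
have spin_from x : (eta, s) <> (eta', flipV s' x).
  by case=> eta_eq s_eq; apply: (spin_to x); rewrite s_eq flipVK eta_eq.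
have edge_from e : (eta, s) <> (flipE eta' e, s').
  by case=> eta_eq s_eq; apply: (edge_to e); rewrite eta_eq flipEK s_eq.
by rewrite (rates_eq0 spin_to edge_to) (rates_eq0 spin_from edge_from) !mulr0.
Qed.

Lemma IP_reversible : reversible (@IP R V G p) (@rates R V G p).
Proof. by move=> a b; rewrite /IP mulrAC [RHS]mulrAC weight_reversible. Qed.

Lemma edge_marginal_not_markov (e : edge G) x y :
  x \in val e -> y \in val e -> x != y -> 0 < p ->
  ~ marginal_is_markov_jump (generator (@rates R V G p)) fst.
Proof.
move=> x_e y_e x_neq_y p_gt0.
pose eta0 : {ffun edge G -> bool} := [ffun => false].
pose s1 : {ffun V -> bool} := [ffun => true].
pose s2 : {ffun V -> bool} := [ffun z => z == x].
have delta_s1 : delta s1 e.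
  by apply/forall_inP => u _; apply/forall_inP => v _; rewrite !ffunE.
have delta_s2 : delta s2 e = false.
  apply/negbTE/forall_inP => /(_ x x_e) /forall_inP /(_ y y_e).
  by rewrite !ffunE eqxx [y == x]eq_sym (negbTE x_neq_y).
apply: (@marginal_not_markov_jump _ _ _ _ _ (eta0, s1) (eta0, s2) (flipE eta0 e)) => //.
  by rewrite /= eq_sym flipE_flipV flipV_neq.
rewrite sum_fst_eq; under eq_bigr do rewrite !rates_flipE.
rewrite sumrB (sumr_dirac s1 (fun=> edge_rate eta0 s1 e)).
rewrite (sumr_dirac s2 (fun=> edge_rate eta0 s2 e)) /edge_rate ffunE delta_s1 delta_s2 /=.
by rewrite !(mulr1, mulr0, addr0, subr0) gt_eqF.
Qed.

Lemma spin_marginal_not_markov (e : edge G) x : x \in val e ->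
  ~ marginal_is_markov_jump (generator (@rates R V G p)) snd.
Proof.
move=> x_e.
pose eta0 : {ffun edge G -> bool} := [ffun => false].
pose eta1 : {ffun edge G -> bool} := [ffun => true].
pose s : {ffun V -> bool} := [ffun => true].
have closed0 : closed_at eta0 x by apply/forallP => g; rewrite ffunE implybT.
have closed1 : closed_at eta1 x = false.
  by apply/negbTE/forallP => /(_ e); rewrite x_e ffunE.
apply: (@marginal_not_markov_jump _ _ _ _ _ (eta0, s) (eta1, s) (flipV s x)) => //.
  by rewrite /= eq_sym flipV_neq.
rewrite sum_snd_eq; under eq_bigr do rewrite !rates_flipV.
rewrite sumrB (sumr_dirac eta0 (fun=> (closed_at eta0 x)%:R)).
rewrite (sumr_dirac eta1 (fun=> (closed_at eta1 x)%:R)) closed0 closed1.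
by rewrite subr0 oner_eq0.
Qed.

End Model.

Theorem theorem1 (R : realType) (V : finType) (G : rel V)
    (G_sym : symmetric G) (G_irr : irreflexive G)
    (E_nonempty : exists x y, G x y)
    (p : R) (hp0 : 0 < p) (hp1 : p < 1) :
  reversible (@IP R V G p) (@rates R V G p) /\
  ~ marginal_is_markov_jump (generator (@rates R V G p)) fst /\
  ~ marginal_is_markov_jump (generator (@rates R V G p)) snd.
Proof.
split; first exact: IP_reversible.
have [x [y Gxy]] := E_nonempty.
have x_neq_y : x != y by apply: contraTneq Gxy => ->; rewrite G_irr.
have xy_edge : is_edge G [set x; y].
  by apply/existsP; exists x; apply/existsP; exists y; rewrite Gxy eqxx.
pose e : edge G := exist _ [set x; y] xy_edge.
have x_e : x \in val e by rewrite set21.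
have y_e : y \in val e by rewrite set22.
split; first exact: edge_marginal_not_markov x_e y_e x_neq_y hp0.
exact: spin_marginal_not_markov x_e.
Qed.
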